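(* Consider the ReLU network with skipped connections, training data $(x^{(i)},y^{(i)})_{i=1}^T\subset\mathbb R^{d_0}\times\mathbb R^{d_0}$ and cost $C=\frac12\sum_{i=1}^T\|F(x^{(i)})-y^{(i)}\|^2$. Fix $l\in[\kappa]$ and define the gradient of $C$ with respect to $\tilde S^l$ (treated as a free matrix) by the chain-rule expression $$\nabla_{\tilde S^l}C:=\sum_{i=1}^T\big(\chi^l(x^{(i)})\otimes I_{d_{l-1}}\big)\,\tilde\Lambda^l(x^{(i)})\,\tilde\Upsilon^{l-1}(x^{(i)})^\top\big(F(x^{(i)})-y^{(i)}\big)\in\mathbb R^{s_ld_{l-1}}$$ (this is the true gradient with respect to $\mathrm{vec}(\tilde S^l)$ whenever no decoder pre-activation at layers $1,\dots,l$ vanishes at any training input). Let $\Gamma^l=[\chi^l(x^{(1)})\cdots\chi^l(x^{(T)})]\in\mathbb R^{s_l\times T}$ and assume $s_l\ge T$ and $d_{l-1}\ge d_0$. Then $$\|\nabla_{\tilde S^l}C\|_F\ge\sigma_{\min}(\Gamma^l)\,\min_{i\in[T]}\sigma_{\min}\big(\tilde\Lambda^l(x^{(i)})\tilde\Upsilon^{l-1}(x^{(i)})^\top\big)\sqrt{2C}$$ and $$\|\nabla_{\tilde S^l}C\|_F\le\sigma_{\max}(\Gamma^l)\,\max_{i\in[T]}\sigma_{\max}\big(\tilde\Lambda^l(x^{(i)})\tilde\Upsilon^{l-1}(x^{(i)})^\top\big)\sqrt{2C}.$$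
   Context: For $A\in\mathbb R^{n\times m}$ with $n\ge m$, $\sigma_{\min}(A)$ and $\sigma_{\max}(A)$ denote the smallest and largest of its $m$ singular values. $\otimes$ is the Kronecker product, $\|\cdot\|_F$ the Frobenius (Euclidean) norm, $\sigma(t)=\max(t,0)$ entrywise, $[n]=\{1,\dots,n\}$. Network with skipped connections on inputs $x\in\mathbb R^{d_0}$, with layer dimensions $d_0,\dots,d_\kappa$ and skip dimensions $s_1,\dots,s_\kappa$: given matrices $E^l\in\mathbb R^{d_{l-1}\times d_l}$, $D^l\in\mathbb R^{d_{l-1}\times d_l}$, $S^l\in\mathbb R^{d_{l-1}\times s_l}$, $\tilde S^l\in\mathbb R^{d_{l-1}\times s_l}$ ($l\in[\kappa]$), define $\xi^0=x$, $\xi^l=\sigma(E^{l\top}\xi^{l-1})$, $\chi^l=\sigma(S^{l\top}\xi^{l-1})$, $\tilde\xi^\kappa=\xi^\kappa$, $\tilde\xi^{l-1}=\sigma(D^l\tilde\xi^l+\tilde S^l\chi^l)$ (decoder pre-activation at layer $l$: $D^l\tilde\xi^l+\tilde S^l\chi^l$), $F(x)=\tilde\xi^0$. $\tilde\Lambda^l(x)\in\mathbb R^{d_{l-1}\times d_{l-1}}$ is diagonal with $i$-th entry $1$ if the $i$-th decoder pre-activation at layer $l$ is $>0$ and $0$ otherwise; $\tilde\Upsilon^0=I_{d_0}$, $\tilde\Upsilon^l(x)=\tilde\Upsilon^{l-1}(x)\tilde\Lambda^l(x)D^l\in\mathbb R^{d_0\times d_l}$. *)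

From HB Require Import structures.
From mathcomp Require Import all_boot all_order all_algebra.
Set Implicit Arguments. Unset Strict Implicit. Unset Printing Implicit Defensive.
Import Order.TTheory GRing.Theory Num.Theory.
Local Open Scope ring_scope.

Section LinAlg.
Variable R : rcfType.

Definition relu m n (A : 'M[R]_(m, n)) : 'M[R]_(m, n) :=
  map_mx (fun t => Num.max t 0) A.

Definition frob m n (A : 'M[R]_(m, n)) : R :=
  Num.sqrt (\sum_(i < m) \sum_(j < n) A i j ^+ 2).

Lemma divord_proof m n (i : 'I_(m * n)) : (i %/ n < m)%N.
Proof.
case: i => /= i Hi; have Hn : (0 < n)%N by case: n Hi; rewrite ?muln0.
by rewrite ltn_divLR.
Qed.
Lemma modord_proof m n (i : 'I_(m * n)) : (i %% n < n)%N.
Proof.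
case: i => /= i Hi; have Hn : (0 < n)%N by case: n Hi; rewrite ?muln0.
by rewrite ltn_mod.
Qed.
Definition divord m n (i : 'I_(m * n)) : 'I_m := Ordinal (divord_proof i).
Definition modord m n (i : 'I_(m * n)) : 'I_n := Ordinal (modord_proof i).

(* Kronecker product: (A (x) B)_{(i1 n2 + i2),(j1 p2 + j2)} = A i1 j1 * B i2 j2 *)
Definition kron m1 n1 m2 n2 (A : 'M[R]_(m1, n1)) (B : 'M[R]_(m2, n2))
  : 'M[R]_(m1 * m2, n1 * n2) :=
  \matrix_(i, j) (A (divord i) (divord j) * B (modord i) (modord j)).

(* Singular values of A in R^{n x m}, n >= m: the nonnegative square roots of
   the eigenvalues of A^T A.  [is_sigma_min A t] : t = sigma_min(A),
   [is_sigma_max A t] : t = sigma_max(A). *)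
Definition is_sigma_min n m (A : 'M[R]_(n, m)) (t : R) : Prop :=
  [/\ 0 <= t, eigenvalue (A^T *m A) (t ^+ 2)
    & forall e, eigenvalue (A^T *m A) e -> t ^+ 2 <= e].
Definition is_sigma_max n m (A : 'M[R]_(n, m)) (t : R) : Prop :=
  [/\ 0 <= t, eigenvalue (A^T *m A) (t ^+ 2)
    & forall e, eigenvalue (A^T *m A) e -> e <= t ^+ 2].

End LinAlg.

Section Network.
Variable R : rcfType.
Variable kappa : nat.
Variables (d s : nat -> nat).            (* d_0..d_kappa, s_1..s_kappa *)
(* layer l in [kappa]; for l = 0 these are unused *)
Variables (E D : forall l : nat, 'M[R]_(d l.-1, d l)).
Variables (S St : forall l : nat, 'M[R]_(d l.-1, s l)).

Section Input.
Variable x : 'cV[R]_(d 0).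

Fixpoint xi (l : nat) : 'cV[R]_(d l) :=
  match l with
  | 0 => x
  | l'.+1 => relu ((E l'.+1)^T *m xi l')
  end.

Definition chi (l : nat) : 'cV[R]_(s l) := relu ((S l)^T *m xi l.-1).

(* decoder, computed top-down: dec m l is tilde-xi^l when m = kappa - l *)
Fixpoint dec (m l : nat) : 'cV[R]_(d l) :=
  match m with
  | 0 => xi l
  | m'.+1 => relu (D l.+1 *m dec m' l.+1 + St l.+1 *m chi l.+1)
  end.

Definition xit (l : nat) : 'cV[R]_(d l) := dec (kappa - l) l.

Definition Fnet : 'cV[R]_(d 0) := xit 0.

Definition preact (l : nat) : 'cV[R]_(d l.-1) := D l *m xit l + St l *m chi l.

Definition Lamt (l : nat) : 'M[R]_(d l.-1) :=
  diag_mx (\row_i (if 0 < preact l i 0 then 1 else 0)).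

Fixpoint Upst (l : nat) : 'M[R]_(d 0, d l) :=
  match l with
  | 0 => 1%:M
  | l'.+1 => Upst l' *m Lamt l'.+1 *m D l'.+1
  end.

End Input.

Variable T : nat.
Variables (xs ys : 'I_T -> 'cV[R]_(d 0)).

Definition cost : R := 2^-1 * \sum_(i < T) frob (Fnet (xs i) - ys i) ^+ 2.

(* chi^l (x) I_{d_{l-1}} has (1 * d_{l-1}) columns; castmx identifies 1*d with d *)
Definition gradSt (l : nat) : 'cV[R]_(s l * d l.-1) :=
  \sum_(i < T) (castmx (erefl, mul1n (d l.-1))
                   (kron (chi (xs i) l) (1%:M : 'M[R]_(d l.-1))) *m Lamt (xs i) l
                 *m (Upst (xs i) l.-1)^T *m (Fnet (xs i) - ys i)).

Definition Gamma (l : nat) : 'M[R]_(s l, T) := \matrix_(k, i) chi (xs i) l k 0.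

Definition LU (l : nat) (i : 'I_T) : 'M[R]_(d l.-1, d 0) :=
  Lamt (xs i) l *m (Upst (xs i) l.-1)^T.

End Network.

(* The gradient, reshaped as an [s_l x d_{l-1}] matrix, is [Gamma^l Z] where the
   columns of [Z^T] are the vectors [w_i = Lambda^l(x_i) Upsilon^{l-1}(x_i)^T r_i]
   built from the residuals [r_i = F(x_i) - y_i].  Hence
   [|grad|^2 = sum_b |Gamma^l z_b|^2] over the rows [z_b] of [Z^T], while
   [sum_b |z_b|^2 = sum_i |w_i|^2] and [sum_i |r_i|^2 = 2C].  Both bounds then
   follow from the Rayleigh-quotient bounds
   [sigma_min(A)^2 |v|^2 <= |A v|^2 <= sigma_max(A)^2 |v|^2], applied once to
   [Gamma^l] and once to each [Lambda^l Upsilon^{l-1 T}]; the Rayleigh bounds in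
   turn come from the spectral theorem for the symmetric matrix [A^T A]. *)
From HB Require Import structures.
From mathcomp Require Import all_boot all_order all_algebra.
From mathcomp Require Import sesquilinear spectral zify.
From mathcomp.real_closed Require Import complex.
Import Order.TTheory GRing.Theory Num.Theory Num.Def.
Local Open Scope ring_scope.
Local Open Scope complex_scope.

Section Rayleigh.
Context {R : rcfType}.

(* The spectral theorem is only available over a closed field, so [M] is
   diagonalised over [R[i]]; the weights [q k] are the squared moduli of the
   coordinates of [u] in an orthonormal eigenbasis. *)
Lemma symmetric_quadform_eigen_decomp n (M : 'M[R]_n) (u : 'rV[R]_n) :
  M^T = M ->
  exists (e : 'I_n -> R) (q : 'I_n -> R[i]),
   [/\ forall k, eigenvalue M (e k), forall k, 0 <= q k,
       ((u *m u^T) 0 0)%:C = \sum_k q k &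
       ((u *m M *m u^T) 0 0)%:C = \sum_k (e k)%:C * q k ].
Proof.
move=> MT.
pose f := real_complex R.
pose Mc := map_mx f M.
have realf (A : 'M[R]_(n, n)) : map_mx f A \is a mxOver Num.real.
  by apply/mxOverP => i j; rewrite mxE; apply/complex_realP; eexists.
have Msym : Mc \is symmetricmx.
  rewrite qualifE /= expr0 scale1r; apply/eqP/matrixP => i j; rewrite !mxE /=.
  by have := congr1 (fun A : 'M_n => A j i) MT; rewrite mxE => ->.
have Mherm := realsym_hermsym Msym (realf M).
have /orthomx_spectralP hP := hermitian_normalmx Mherm.
have spreal := hermitian_spectral_diag_real Mherm.
set P := spectralmx Mc in hP.
set sp := spectral_diag Mc in hP spreal.
have Pu : P \is unitarymx by apply: spectral_unitarymx.
rewrite invmx_unitary // in hP.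
pose e k := complex.Re (sp 0 k).
have spE k : (e k)%:C = sp 0 k.
  by apply: RRe_real; move/mxOverP: spreal; apply.
have mapE (A : 'M[R]_1) : (A 0 0)%:C = (map_mx f A) 0 0 by rewrite mxE.
have uTE : map_mx f u^T = (map_mx f u^T ^ conjC)%sesqui.
  rewrite realmxC //.
  by apply/mxOverP => i j; rewrite !mxE; apply/complex_realP; eexists.
pose w := map_mx f u *m (P ^t conjC)%sesqui.
exists e, (fun k => w 0 k * (w 0 k)^*); split.
- move=> k; rewrite -(eigenvalue_map f) /= spE.
  apply/eigenvalueP; exists (row k P).
    change (row k P *m Mc = sp 0 k *: row k P).
    rewrite -row_mul hP !mulmxA (unitarymxP Pu) mul1mx.
    by apply/rowP => j; rewrite mul_diag_mx !mxE.
  apply/negP => /eqP h0.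
  have := congr1 (fun A : 'M_n => row k A) (unitarymxP Pu).
  rewrite row_mul h0 mul0mx => /rowP/(_ k); rewrite !mxE eqxx /=.
  by move/eqP; rewrite eq_sym oner_eq0.
- by move=> k; apply: mul_conjC_ge0.
- rewrite mapE map_mxM uTE -(mulmxKtV (map_mx f u) Pu) //.
  have -> : map_mx f u *m (P ^t*)%sesqui *m P *m map_mx conjC (map_mx f u^T)
     = w *m (w ^t*)%sesqui.
    by rewrite -mulmxA /w trmx_mul map_mxM trmxCK map_trmx.
  by rewrite mxE; apply: eq_bigr => k _; rewrite !mxE.
- rewrite mapE !map_mxM uTE (_ : map_mx _ M = Mc) // hP.
  have -> : map_mx f u *m ((P ^t*)%sesqui *m diag_mx sp *m P)
              *m map_mx conjC (map_mx f u^T)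
     = w *m diag_mx sp *m (w ^t*)%sesqui.
    by rewrite /w trmx_mul map_mxM trmxCK map_trmx !mulmxA.
  rewrite mxE; apply: eq_bigr => k _; rewrite mul_mx_diag !mxE spE.
  by rewrite mulrAC mulrC.
Qed.

Lemma quadform_ge_eigen n (M : 'M[R]_n) (u : 'rV[R]_n) (lo : R) :
  M^T = M -> (forall e, eigenvalue M e -> lo <= e) ->
  lo * (u *m u^T) 0 0 <= (u *m M *m u^T) 0 0.
Proof.
move=> MT hlo.
have [e [q [he hq h1 h2]]] := symmetric_quadform_eigen_decomp _ _ u MT.
by rewrite -lecR rmorphM /= h1 h2 mulr_sumr; apply: ler_sum => k _;
  rewrite ler_wpM2r // lecR hlo.
Qed.

Lemma quadform_le_eigen n (M : 'M[R]_n) (u : 'rV[R]_n) (hi : R) :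
  M^T = M -> (forall e, eigenvalue M e -> e <= hi) ->
  (u *m M *m u^T) 0 0 <= hi * (u *m u^T) 0 0.
Proof.
move=> MT hhi.
have [e [q [he hq h1 h2]]] := symmetric_quadform_eigen_decomp _ _ u MT.
by rewrite -lecR rmorphM /= h1 h2 mulr_sumr; apply: ler_sum => k _;
  rewrite ler_wpM2r // lecR hhi.
Qed.

Definition sqnorm {n} (v : 'cV[R]_n) : R := \sum_k v k 0 ^+ 2.

Lemma sqnorm_ge0 {n} (v : 'cV[R]_n) : 0 <= sqnorm v.
Proof. by apply: sumr_ge0 => k _; apply: sqr_ge0. Qed.

Lemma frob_col {n} (v : 'cV[R]_n) : frob v = Num.sqrt (sqnorm v).
Proof. by rewrite /frob; congr Num.sqrt; apply: eq_bigr => k _; rewrite big_ord1. Qed.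

Lemma sqnorm_quadform {n} (v : 'cV[R]_n) : (v^T *m v^T^T) 0 0 = sqnorm v.
Proof. by rewrite trmxK mxE; apply: eq_bigr => k _; rewrite !mxE expr2. Qed.

Lemma sqnorm_mulmx_quadform {p n} (A : 'M[R]_(p, n)) (v : 'cV[R]_n) :
  (v^T *m (A^T *m A) *m v^T^T) 0 0 = sqnorm (A *m v).
Proof.
rewrite trmxK mulmxA -trmx_mul -mulmxA mxE; apply: eq_bigr => k _.
by rewrite !mxE expr2.
Qed.

Lemma gram_sym {p n} (A : 'M[R]_(p, n)) : (A^T *m A)^T = A^T *m A.
Proof. by rewrite trmx_mul trmxK. Qed.

Lemma sigma_min_sqnorm {p n} (A : 'M[R]_(p, n)) t (v : 'cV[R]_n) :
  is_sigma_min A t -> t ^+ 2 * sqnorm v <= sqnorm (A *m v).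
Proof.
case=> _ _ hmin.
rewrite -(sqnorm_quadform v) -(sqnorm_mulmx_quadform A v).
by rewrite quadform_ge_eigen ?gram_sym.
Qed.

Lemma sigma_max_sqnorm {p n} (A : 'M[R]_(p, n)) t (v : 'cV[R]_n) :
  is_sigma_max A t -> sqnorm (A *m v) <= t ^+ 2 * sqnorm v.
Proof.
case=> _ _ hmax.
rewrite -(sqnorm_quadform v) -(sqnorm_mulmx_quadform A v).
by rewrite quadform_le_eigen ?gram_sym.
Qed.

Lemma sum_sqnorm_mulmx_ge {I : finType} {p n} (A : I -> 'M[R]_(p, n))
    (sg : I -> R) (v : I -> 'cV[R]_n) (m : R) :
  0 <= m -> (forall i, m <= sg i) -> (forall i, is_sigma_min (A i) (sg i)) ->
  m ^+ 2 * \sum_i sqnorm (v i) <= \sum_i sqnorm (A i *m v i).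
Proof.
move=> m0 hm hA; rewrite mulr_sumr; apply: ler_sum => i _.
apply: le_trans (sigma_min_sqnorm _ _ (v i) (hA i)).
by rewrite ler_wpM2r ?sqnorm_ge0 // ler_sqr // nnegrE (le_trans m0).
Qed.

Lemma sum_sqnorm_mulmx_le {I : finType} {p n} (A : I -> 'M[R]_(p, n))
    (sg : I -> R) (v : I -> 'cV[R]_n) (m : R) :
  (forall i, sg i <= m) -> (forall i, is_sigma_max (A i) (sg i)) ->
  \sum_i sqnorm (A i *m v i) <= m ^+ 2 * \sum_i sqnorm (v i).
Proof.
move=> hm hA; rewrite mulr_sumr; apply: ler_sum => i _.
have [sg0 _ _] := hA i.
apply: le_trans (sigma_max_sqnorm _ _ (v i) (hA i)) _.
by rewrite ler_wpM2r ?sqnorm_ge0 // ler_sqr // nnegrE (le_trans sg0).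
Qed.

Lemma mulr_sqrt (a X : R) : 0 <= a -> a * Num.sqrt X = Num.sqrt (a ^+ 2 * X).
Proof. by move=> a0; rewrite sqrtrM ?sqr_ge0 // sqrtr_sqr ger0_norm. Qed.

End Rayleigh.

Lemma sum_divord_modord (V : nmodType) m n (F : 'I_m -> 'I_n -> V) :
  \sum_(j : 'I_(m * n)) F (divord j) (modord j) = \sum_a \sum_b F a b.
Proof.
have hlt (p : 'I_m * 'I_n) : (p.1 * n + p.2 < m * n)%N.
  by case: p => [[a ha] [b hb]] /=; nia.
rewrite pair_big /= (reindex (fun j : 'I_(m * n) => (divord j, modord j))) //=.
exists (fun p => Ordinal (hlt p)) => [j _ | [a b] _].
  by apply: val_inj; rewrite /= -divn_eq.
have n0 : (0 < n)%N by case: b => b; lia.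
congr pair; apply: val_inj => /=.
  by rewrite divnMDl // divn_small // addn0.
by rewrite modnMDl modn_small.
Qed.

Section Gradient.
Variable R : rcfType.
Variables (kappa : nat) (d s : nat -> nat).
Variables (E D : forall l : nat, 'M[R]_(d l.-1, d l)).
Variables (S St : forall l : nat, 'M[R]_(d l.-1, s l)).
Variables (T : nat) (xs ys : 'I_T -> 'cV[R]_(d 0)).

Let residual i := Fnet kappa E D S St (xs i) - ys i.

Lemma cost_sqnorm : 2 * cost kappa E D S St xs ys = \sum_i sqnorm (residual i).
Proof.
rewrite /cost mulrA divff ?pnatr_eq0 // mul1r; apply: eq_bigr => i _.
by rewrite frob_col sqr_sqrtr ?sqnorm_ge0.
Qed.

Variable l : nat.

Let backprop i := LU kappa E D S St xs l i *m residual i.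

Lemma gradSt_entry (j : 'I_(s l * d l.-1)) :
  gradSt kappa E D S St xs ys l j 0 =
  \sum_i chi E S (xs i) l (divord j) 0 * backprop i (modord j) 0.
Proof.
rewrite /gradSt summxE; apply: eq_bigr => i _.
rewrite (_ : _ *m _ *m _ *m _ = castmx (erefl, mul1n (d l.-1))
     (kron (chi E S (xs i) l) (1%:M : 'M[R]_(d l.-1))) *m backprop i); last first.
  by rewrite /backprop /LU !mulmxA.
rewrite mxE (bigD1 (modord j)) //= big1 => [|k hk];
  rewrite castmxE /kron !mxE cast_ord_id.
  have -> : divord (cast_ord (esym (mul1n (d l.-1))) (modord j)) = 0 by apply: ord1.
  have -> : modord (cast_ord (esym (mul1n (d l.-1))) (modord j)) = modord j.
    by apply: val_inj => /=; rewrite modn_mod.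
  by rewrite eqxx mulr1 addr0.
have -> : modord (cast_ord (esym (mul1n (d l.-1))) k) = k.
  by apply: val_inj; rewrite /= modn_small.
by rewrite eq_sym (negbTE hk) mulr0 mul0r.
Qed.

Let backprop_col (b : 'I_(d l.-1)) : 'cV[R]_T := \col_i backprop i b 0.

Lemma sqnorm_gradSt :
  sqnorm (gradSt kappa E D S St xs ys l)
  = \sum_b sqnorm (Gamma E S xs l *m backprop_col b).
Proof.
rewrite /sqnorm exchange_big -sum_divord_modord; apply: eq_bigr => j _.
by rewrite gradSt_entry mxE; congr (_ ^+ 2); apply: eq_bigr => i _; rewrite !mxE.
Qed.

Lemma sum_sqnorm_backprop_col :
  \sum_b sqnorm (backprop_col b) = \sum_i sqnorm (backprop i).
Proof.
by rewrite exchange_big; apply: eq_bigr => i _; apply: eq_bigr => b _; rewrite mxE.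
Qed.

Lemma sqnorm_gradSt_ge (sG m : R) (sg : 'I_T -> R) :
  is_sigma_min (Gamma E S xs l) sG ->
  (forall i, is_sigma_min (LU kappa E D S St xs l i) (sg i)) ->
  0 <= m -> (forall i, m <= sg i) ->
  (sG * m) ^+ 2 * (2 * cost kappa E D S St xs ys)
    <= sqnorm (gradSt kappa E D S St xs ys l).
Proof.
move=> hG hLU m0 hm; have [sG0 _ _] := hG.
rewrite cost_sqnorm sqnorm_gradSt exprMn -mulrA.
have hGb := sum_sqnorm_mulmx_ge (fun=> Gamma E S xs l) (fun=> sG) backprop_col sG
  sG0 (fun=> lexx sG) (fun=> hG).
apply: le_trans hGb.
rewrite ler_wpM2l ?sqr_ge0 // sum_sqnorm_backprop_col.
exact: sum_sqnorm_mulmx_ge.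
Qed.

Lemma sqnorm_gradSt_le (sG m : R) (sg : 'I_T -> R) :
  is_sigma_max (Gamma E S xs l) sG ->
  (forall i, is_sigma_max (LU kappa E D S St xs l i) (sg i)) ->
  (forall i, sg i <= m) ->
  sqnorm (gradSt kappa E D S St xs ys l)
    <= (sG * m) ^+ 2 * (2 * cost kappa E D S St xs ys).
Proof.
move=> hG hLU hm.
rewrite cost_sqnorm sqnorm_gradSt exprMn -mulrA.
have hGb := sum_sqnorm_mulmx_le (fun=> Gamma E S xs l) (fun=> sG) backprop_col sG
  (fun=> lexx sG) (fun=> hG).
apply: le_trans hGb _.
rewrite ler_wpM2l ?sqr_ge0 // sum_sqnorm_backprop_col.
exact: sum_sqnorm_mulmx_le.
Qed.

End Gradient.

(* [hl], [hsT] and [hd] are unused: they only make [Gamma^l] and each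
   [Lambda^l Upsilon^{l-1 T}] tall, which the eigenvalue characterisation of
   their singular values in [is_sigma_min]/[is_sigma_max] does not require. *)
Theorem lemma2 (R : rcfType) (kappa : nat) (d s : nat -> nat)
  (E D : forall l : nat, 'M[R]_(d l.-1, d l))
  (S St : forall l : nat, 'M[R]_(d l.-1, s l))
  (T : nat) (xs ys : 'I_T -> 'cV[R]_(d 0)) (l : nat)
  (hl : (0 < l <= kappa)%N) (hsT : (T <= s l)%N) (hd : (d 0 <= d l.-1)%N)
  (sGmin sGmax : R) (smin smax : 'I_T -> R) :
  is_sigma_min (Gamma E S xs l) sGmin ->
  is_sigma_max (Gamma E S xs l) sGmax ->
  (forall i, is_sigma_min (LU kappa E D S St xs l i) (smin i)) ->
  (forall i, is_sigma_max (LU kappa E D S St xs l i) (smax i)) ->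
  let g := frob (gradSt kappa E D S St xs ys l) in
  let C := cost kappa E D S St xs ys in
  (forall mn, (exists i, mn = smin i) -> (forall i, mn <= smin i) ->
     sGmin * mn * Num.sqrt (2 * C) <= g) /\
  (forall mx, (exists i, mx = smax i) -> (forall i, smax i <= mx) ->
     g <= sGmax * mx * Num.sqrt (2 * C)).
Proof.
move=> hGmin hGmax hmin hmax g C; rewrite /g frob_col.
have [sGmin0 _ _] := hGmin; have [sGmax0 _ _] := hGmax.
split=> [mn [i0 ->] hmn | mx [i0 ->] hmx].
- have [smin0 _ _] := hmin i0.
  rewrite mulr_sqrt ?mulr_ge0 //; apply: ler_wsqrtr.
  exact: sqnorm_gradSt_ge.
- have [smax0 _ _] := hmax i0.
  rewrite mulr_sqrt ?mulr_ge0 //; apply: ler_wsqrtr.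
  exact: sqnorm_gradSt_le.
Qed.
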